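(* For every $\varepsilon>0$ there exists $N\in\omega$ such that for every $n\geq N$ there is a set $A\subseteq 2^n$ with $\frac{|A|}{2^n}<\varepsilon$ having the following property: for every $u\subseteq n$ with $\frac{n}{4}\leq |u|\leq \frac{3n}{4}$, and all $B_0\subseteq 2^u$ and $B_1\subseteq 2^{n\setminus u}$ with $\frac{|B_0|}{2^{|u|}}\geq \frac12$ and $\frac{|B_1|}{2^{|n\setminus u|}}\geq\frac12$, we have $(B_0\times B_1)\cap A\neq\emptyset$.
   Context: Here $n=\{0,1,\dots,n-1\}$ and $2^a$ denotes the set of functions from $a$ to $\{0,1\}$. The product $B_0\times B_1$ is identified with the set of $s\in 2^n$ such that $s\restriction u\in B_0$ and $s\restriction (n\setminus u)\in B_1$. *)

From HB Require Import structures.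
From mathcomp Require Import all_boot all_order all_algebra.
From mathcomp Require Export reals.
Set Implicit Arguments. Unset Strict Implicit. Unset Printing Implicit Defensive.

(* 2^n = finite functions 'I_n -> bool; for u : {set 'I_n},
   2^u = finite functions from the subtype {i | i \in u} to bool. *)
Definition cube (n : nat) := {ffun 'I_n -> bool}.
Definition subcube (n : nat) (u : {set 'I_n}) := {ffun {i : 'I_n | i \in u} -> bool}.

Definition restr (n : nat) (u : {set 'I_n}) (s : cube n) : subcube u :=
  [ffun i : {i : 'I_n | i \in u} => s (val i)].

From HB Require Import structures.
From mathcomp Require Import all_boot all_order all_algebra.
From mathcomp Require Import reals.
From mathcomp Require Import zify lra.
Import Order.TTheory GRing.Theory Num.Theory.
Set Implicit Arguments. Unset Strict Implicit. Unset Printing Implicit Defensive.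

(* Take A to be the words whose weight is divisible by a large odd p. By Pascal's
   rule the number of subsets of an m-set of size r modulo p is the sum of the counts
   for r and r - 1 at m - 1; within p - 1 steps the smallest class has reached every
   residue, so the spread between the classes shrinks geometrically relative to 2^m,
   and eventually every class holds at most (p + 1) / p^2 of all subsets. Hence A has
   density about 1/p, while a set of density 1/2 in 2^u must meet more than p/2 weight
   classes modulo p, and so must one in 2^(n\u). By pigeonhole a weight of B0 and a
   weight of B1 add up to 0 modulo p, and gluing the two witnesses gives a point of A
   in B0 x B1. *)

Local Open Scope nat_scope.

Definition binom_mod p m r := \sum_(k < m.+1) (if k %% p == r then 'C(m, k) else 0).

Definition predmod p r := if r == 0 then p.-1 else r.-1.

Lemma predmod_lt p r : 0 < p -> r < p -> predmod p r < p.
Proof. by rewrite /predmod; case: eqP; lia. Qed.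

Lemma modS_eq_predmod p k r : 0 < p -> r < p -> (k.+1 %% p == r) = (k %% p == predmod p r).
Proof.
move=> p_gt0 r_lt_p; rewrite -addn1 -modnDml addn1 /predmod.
have := ltn_pmod k p_gt0; move: (k %% p) => q q_lt_p.
have [q1_eq_p | /eqP q1_neq_p] := eqVneq q.+1 p.
  by rewrite q1_eq_p modnn; case: ifP => /eqP r0; apply/eqP/eqP; lia.
by rewrite modn_small; [case: ifP => /eqP r0; apply/eqP/eqP | ]; lia.
Qed.

Lemma binom_modS p m r : 0 < p -> r < p ->
  binom_mod p m.+1 r = binom_mod p m r + binom_mod p m (predmod p r).
Proof.
move=> p_gt0 r_lt_p; rewrite /binom_mod big_ord_recl [in RHS]big_ord_recl /= !bin0.
under eq_bigr => i _ do rewrite /bump /= add1n binS modS_eq_predmod //.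
under [in RHS]eq_bigr => i _ do rewrite /bump /= add1n modS_eq_predmod //.
rewrite -!big_mkcond big_split /= addnA; congr (_ + _ + _).
by rewrite big_mkcond big_ord_recr /= bin_small // if_same addn0 -big_mkcond.
Qed.

Lemma sum_binom_mod p m : 0 < p -> \sum_(r < p) binom_mod p m r = 2 ^ m.
Proof.
move=> p_gt0; rewrite exchange_big /= -[2]/(1 + 1) expnDn /=.
apply: eq_bigr => k _; rewrite !exp1n !muln1 -big_mkcond.
by rewrite (big_pred1 (Ordinal (ltn_pmod k p_gt0))).
Qed.

Definition binom_mod_spread p m s :=
  exists lo, forall r, r < p -> lo <= binom_mod p m r <= lo + s.

Lemma binom_mod_spread0 p : binom_mod_spread p 0 1.
Proof. by exists 0 => r _; rewrite /binom_mod big_ord1; case: eqP. Qed.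

Lemma binom_mod_spreadD p m s t : 0 < p ->
  binom_mod_spread p m s -> binom_mod_spread p (m + t) (2 ^ t * s).
Proof.
move=> p_gt0 [lo lo_s]; exists (2 ^ t * lo); elim: t => [|t IHt] r r_lt_p.
  by rewrite addn0 !mul1n lo_s.
rewrite addnS binom_modS // !expnS.
by have := IHt r r_lt_p; have := IHt _ (predmod_lt p_gt0 r_lt_p); lia.
Qed.

Definition fwd_dist p r0 r := if r0 <= r then r - r0 else r + p - r0.

Lemma fwd_dist_lt p r0 r : r0 < p -> r < p -> fwd_dist p r0 r < p.
Proof. by rewrite /fwd_dist; case: (leqP r0 r); lia. Qed.

Lemma fwd_dist0 p r0 r : r0 < p -> r < p -> fwd_dist p r0 r <= 0 -> r = r0.
Proof. by rewrite /fwd_dist; case: (leqP r0 r); lia. Qed.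

Lemma fwd_dist_predmod p r0 r i : r0 < p -> r < p -> fwd_dist p r0 r <= i.+1 ->
  fwd_dist p r0 r <= i \/ fwd_dist p r0 (predmod p r) <= i.
Proof.
rewrite /fwd_dist /predmod; case: eqP => ?; case: (leqP r0 r) => ?;
  case: (leqP r0 r.-1) => ?; case: (leqP r0 p.-1) => ?; lia.
Qed.

(* Within i steps the deficit hi - lo of the minimal class r0 is inherited by every
   class at forward distance at most i from r0. *)
Lemma binom_mod_propagate p m lo hi r0 : 0 < p -> r0 < p -> binom_mod p m r0 = lo ->
    (forall r, r < p -> lo <= binom_mod p m r <= hi) ->
  forall i r, r < p -> [/\ 2 ^ i * lo <= binom_mod p (m + i) r,
    binom_mod p (m + i) r <= 2 ^ i * hi &
    fwd_dist p r0 r <= i -> binom_mod p (m + i) r + hi <= 2 ^ i * hi + lo].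
Proof.
move=> p_gt0 r0_lt_p min_r0 lo_hi; elim=> [|i IHi] r r_lt_p.
  rewrite addn0 !mul1n; have := lo_hi r r_lt_p; split; try lia.
  by move=> /(fwd_dist0 r0_lt_p r_lt_p) ->; rewrite min_r0; lia.
rewrite addnS binom_modS // expnS.
have [lo_r hi_r near_r] := IHi r r_lt_p.
have [lo_r' hi_r' near_r'] := IHi _ (predmod_lt p_gt0 r_lt_p).
split; try lia.
by move=> /fwd_dist_predmod -/(_ r0_lt_p r_lt_p) [/near_r | /near_r']; lia.
Qed.

Lemma binom_mod_spread_contract p m s : 1 < p ->
  binom_mod_spread p m s -> binom_mod_spread p (m + p.-1) ((2 ^ p.-1).-1 * s).
Proof.
move=> p_gt1 [lo lo_s]; have p_gt0 : 0 < p by lia.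
have [r0 _ min_r0] := @arg_minnP _ (Ordinal p_gt0) xpredT (binom_mod p m) isT.
have lo_hi r : r < p -> binom_mod p m r0 <= binom_mod p m r <= binom_mod p m r0 + s.
  by move=> r_lt_p; have := lo_s r r_lt_p; have := lo_s r0 (ltn_ord r0);
    have /= := min_r0 (Ordinal r_lt_p) isT; lia.
exists (2 ^ p.-1 * binom_mod p m r0) => r r_lt_p.
have [lo_r hi_r near_r] := binom_mod_propagate p_gt0 (ltn_ord r0) erefl lo_hi p.-1 r_lt_p.
have dist_le : fwd_dist p r0 r <= p.-1 by have := fwd_dist_lt (ltn_ord r0) r_lt_p; lia.
have := near_r dist_le.
have : 0 < 2 ^ p.-1 by rewrite expn_gt0.
by move: (2 ^ p.-1) lo_r => x; nia.
Qed.

Lemma binom_mod_spread_iter p j : 1 < p ->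
  binom_mod_spread p (j * p.-1) ((2 ^ p.-1).-1 ^ j).
Proof.
move=> p_gt1; elim: j => [|j IHj]; first exact: binom_mod_spread0.
by rewrite mulSn addnC expnS; apply: binom_mod_spread_contract.
Qed.

Lemma expn_bernoulli b j : b ^ j * (b + j) <= b * b.+1 ^ j.
Proof.
elim: j => [|j IHj]; first by rewrite muln1 addn0 mul1n.
have := leq_mul IHj (leqnn b.+1); rewrite !expnS; nia.
Qed.

Lemma mul_expn_le_expnS b c : 0 < b -> c.+1 * b ^ (c * b) <= b.+1 ^ (c * b).
Proof.
move=> b_gt0; have := expn_bernoulli b (c * b).
by rewrite -[b + _]mulSn [c.+1 * b]mulnC mulnCA leq_pmul2l // mulnC.
Qed.

Lemma binom_mod_spread_small p : 1 < p ->
  exists M, forall m, M <= m -> exists2 s, binom_mod_spread p m s & p ^ 2 * s <= 2 ^ m.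
Proof.
(* Bernoulli: b^j * p^2 <= (b + 1)^j = 2^(j (p - 1)) for j = p^2 b. *)
move=> p_gt1; set b := (2 ^ p.-1).-1; set j := p ^ 2 * b.
have bS : b.+1 = 2 ^ p.-1 by rewrite prednK ?expn_gt0.
have b_gt0 : 0 < b by rewrite -ltnS bS -{1}(expn0 2) ltn_exp2l; lia.
exists (j * p.-1) => m le_m; exists (2 ^ (m - j * p.-1) * b ^ j).
  by have := binom_mod_spreadD (m - j * p.-1) (ltnW p_gt1) (binom_mod_spread_iter j p_gt1);
    rewrite subnKC.
have : p ^ 2 * b ^ j <= 2 ^ (j * p.-1).
  rewrite [j * _]mulnC expnM -bS; apply: leq_trans (mul_expn_le_expnS _ b_gt0).
  by rewrite leq_mul2r leqnSn orbT.
have -> : 2 ^ m = 2 ^ (m - j * p.-1) * 2 ^ (j * p.-1) by rewrite -expnD subnK.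
by rewrite mulnCA leq_mul2l => ->; rewrite orbT.
Qed.

Definition binom_mod_flat p m := forall r, r < p -> p ^ 2 * binom_mod p m r <= p.+1 * 2 ^ m.

Lemma binom_mod_flat_eventually p : 1 < p -> exists M, forall m, M <= m -> binom_mod_flat p m.
Proof.
move=> p_gt1; have [M small] := binom_mod_spread_small p_gt1.
exists M => m /small [s [lo lo_s] ps_le] r r_lt_p.
have plo_le : p * lo <= 2 ^ m.
  rewrite -(sum_binom_mod m (ltnW p_gt1)) -[p in p * _]card_ord -sum_nat_const.
  by apply: leq_sum => i _; have /andP[] := lo_s i (ltn_ord i).
have /andP[_ hi] := lo_s r r_lt_p.
have := leq_mul (leqnn (p ^ 2)) hi; rewrite mulnDr mulSn; nia.
Qed.

Section Weights.

Variable T : finType.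

Definition weight (x : {ffun T -> bool}) := #|[set i | x i]|.

Definition weight_class p r := [set x : {ffun T -> bool} | weight x %% p == r].

Lemma card_size_class p r :
  #|[set X : {set T} | #|X| %% p == r]| = binom_mod p #|T| r.
Proof.
rewrite -sum1_card (partition_big (fun X : {set T} => inord #|X| : 'I_#|T|.+1) xpredT) //=.
apply: eq_bigr => k _.
rewrite (eq_bigl (fun X : {set T} => (k %% p == r) && (#|X| == k))) => [|X]; last first.
  have -> : (inord #|X| == k) = (#|X| == k) by rewrite -val_eqE /= inordK // ltnS max_card.
  by rewrite inE; case: (#|X| =P k) => [->|]; rewrite ?andbT ?andbF.
case: ifP => _; last by rewrite big_pred0.
by rewrite sum1_card -card_draws; apply: eq_card => X; rewrite inE.
Qed.

Lemma card_weight_class p r : #|weight_class p r| = binom_mod p #|T| r.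
Proof.
rewrite -card_size_class -(on_card_preimset (f := fun x : {ffun T -> bool} => [set i | x i])).
  by apply: eq_card => x; rewrite !inE.
apply: onW_bij; exists (fun X : {set T} => [ffun i => i \in X]) => [x | X].
  by apply/ffunP => i; rewrite ffunE inE.
by apply/setP => i; rewrite !inE ffunE.
Qed.

Definition weight_residues p (B : {set {ffun T -> bool}}) :=
  [set r : 'I_p | [exists x in B, weight x %% p == r]].

Lemma weight_residues_gt_half p (B : {set {ffun T -> bool}}) :
    1 < p -> odd p -> binom_mod_flat p #|T| -> 2 ^ #|T| <= 2 * #|B| ->
  p < 2 * #|weight_residues p B|.
Proof.
move=> p_gt1 p_odd flat half_B; have p_gt0 : 0 < p by lia.
pose res x : 'I_p := Ordinal (ltn_pmod (weight x) p_gt0).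
have cover_B : p ^ 2 * #|B| <= #|weight_residues p B| * (p.+1 * 2 ^ #|T|).
  rewrite -sum1_card (partition_big res [in weight_residues p B]) => [|x xB]; last first.
    by rewrite inE; apply/existsP; exists x; rewrite xB /=.
  rewrite big_distrr -sum_nat_const /=; apply: leq_sum => r _.
  apply: leq_trans (flat r (ltn_ord r)); rewrite leq_mul2l -card_weight_class sum1_card.
  apply/orP; right; apply: subset_leq_card; apply/subsetP => x.
  by rewrite !inE => /andP[_ /eqP <-].
have : 0 < 2 ^ #|T| by rewrite expn_gt0.
move: (2 ^ #|T|) (#|B|) (#|weight_residues p B|) half_B cover_B => X b R half_B cover_B X_gt0.
have : p ^ 2 <= 2 * R * p.+1.
  by rewrite -(leq_pmul2r X_gt0); apply: leq_trans (leq_mul (leqnn _) half_B) _; nia.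
(* for odd p, 2 R <= p would mean 2 R <= p - 1, and then 2 R (p + 1) < p^2 *)
by rewrite -(odd_double_half p) p_odd -muln2; move: (p./2) => q; nia.
Qed.

End Weights.

Definition oppI p (r : 'I_p) : 'I_p :=
  Ordinal (ltn_pmod (p - r) (leq_ltn_trans (leq0n r) (ltn_ord r))).

Lemma oppI_add_mod0 p (r : 'I_p) : (oppI r + r) %% p = 0.
Proof. by rewrite /= modnDml subnK ?modnn // ltnW. Qed.

Lemma oppI_inj p : injective (@oppI p).
Proof.
move=> a b /(congr1 val) /= eq_ab; apply: val_inj; apply/eqP.
have : (p - a) %% p + a == (p - b) %% p + b %[mod p].
  by rewrite !modnDml !subnK ?modnn // ltnW.
by rewrite eq_ab eqn_modDl !modn_small.
Qed.

Lemma inj_meet_card (T : finType) (f : T -> T) (A B : {set T}) :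
  injective f -> #|T| < #|A| + #|B| -> exists2 b, b \in B & f b \in A.
Proof.
move=> f_inj card_gt; have : A :&: f @: B != set0.
  rewrite -cards_eq0; apply: contraTneq card_gt => meet0.
  by rewrite -[#|B|](card_imset _ f_inj) -cardsUI meet0 addn0 -leqNgt max_card.
by case/set0Pn => a /setIP[a_A /imsetP[b b_B a_def]]; exists b; rewrite -?a_def.
Qed.

Lemma residues_sum_mod0 p (R0 R1 : {set 'I_p}) : p < #|R0| + #|R1| ->
  exists r0 r1 : 'I_p, [/\ r0 \in R0, r1 \in R1 & (r0 + r1) %% p = 0].
Proof.
rewrite -[p in p < _]card_ord => /(inj_meet_card (@oppI_inj p))[r1 r1_R1 opp_R0].
by exists (oppI r1), r1; rewrite oppI_add_mod0.
Qed.

Lemma card_sig_set (T : finType) (A : {set T}) : #|{: {x : T | x \in A}}| = #|A|.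
Proof. by rewrite card_sig; apply: eq_card. Qed.

Lemma weight_restr n (u : {set 'I_n}) (s : cube n) :
  weight (restr u s) = #|[set i | s i] :&: u|.
Proof.
rewrite /weight -(card_imset _ val_inj); apply: eq_card => i; rewrite !inE.
apply/imsetP/andP => [[j] | [si iu]].
  by rewrite inE ffunE => sj ->; split => //; exact: valP.
by exists (exist _ i iu); rewrite // inE ffunE.
Qed.

Lemma weightD_restr n (u : {set 'I_n}) (s : cube n) :
  weight s = weight (restr u s) + weight (restr (~: u) s).
Proof. by rewrite !weight_restr -setDE cardsID. Qed.

Lemma restr_glue n (u : {set 'I_n}) (x0 : subcube u) (x1 : subcube (~: u)) :
  exists s : cube n, restr u s = x0 /\ restr (~: u) s = x1.
Proof.
exists [ffun i => if insub i is Some j then x0 j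
                  else if insub i is Some j then x1 j else false].
split; apply/ffunP => j; rewrite !ffunE ?valK //.
by rewrite insubN ?valK // -in_setC (valP j).
Qed.

Lemma product_meets_weight_class n p (u : {set 'I_n})
    (B0 : {set subcube u}) (B1 : {set subcube (~: u)}) :
  1 < p -> odd p -> binom_mod_flat p #|u| -> binom_mod_flat p #|~: u| ->
  2 ^ #|u| <= 2 * #|B0| -> 2 ^ #|~: u| <= 2 * #|B1| ->
  exists s : cube n,
    [/\ s \in weight_class 'I_n p 0, restr u s \in B0 & restr (~: u) s \in B1].
Proof.
move=> p_gt1 p_odd flat0 flat1 half0 half1.
have res0 := @weight_residues_gt_half _ p B0 p_gt1 p_odd.
have res1 := @weight_residues_gt_half _ p B1 p_gt1 p_odd.
rewrite !card_sig_set in res0 res1.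
have [r0 [r1 []]] : exists r0 r1 : 'I_p, [/\ r0 \in weight_residues p B0,
    r1 \in weight_residues p B1 & (r0 + r1) %% p = 0].
  apply: residues_sum_mod0; have := res0 flat0 half0; have := res1 flat1 half1.
  by move: #|weight_residues p B0| #|weight_residues p B1| => a b; lia.
rewrite !inE => /exists_inP[x0 x0_B0 /eqP w0] /exists_inP[x1 x1_B1 /eqP w1] sum0.
have [s [s_x0 s_x1]] := restr_glue x0 x1.
by exists s; rewrite s_x0 s_x1 inE (weightD_restr u) s_x0 s_x1 -modnDm w0 w1 sum0.
Qed.

Local Open Scope ring_scope.

Lemma natr_half_le_ratio (R : realFieldType) b c : (0 < c)%N ->
  1 / 2 <= b%:R / c%:R :> R -> (c <= 2 * b)%N.
Proof. by move=> c_gt0; rewrite ler_pdivlMr ?ltr0n // -(ler_nat R) natrM; lra. Qed.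

Lemma natr_quarter_le (R : realFieldType) n k : n%:R / 4 <= k%:R :> R -> (n <= 4 * k)%N.
Proof. by rewrite -(ler_nat R) natrM; lra. Qed.

Lemma natr_le_three_quarters (R : realFieldType) n k :
  k%:R <= 3 * n%:R / 4 :> R -> (4 * k <= 3 * n)%N.
Proof. by rewrite -(ler_nat R) !natrM; lra. Qed.

Lemma exists_odd_natr_gt (R : archiRealFieldType) (x : R) :
  exists p, [/\ (1 < p)%N, odd p & x < p%:R].
Proof.
exists (Num.bound `|x|).*2.+3; rewrite /= odd_double; split => //.
apply: le_lt_trans (ler_norm x) _; apply: lt_le_trans (archi_boundP (normr_ge0 x)) _.
by rewrite ler_nat; move: (Num.bound _) => b; lia.
Qed.

Lemma ratio_lt_of_sq_mul_le (R : realFieldType) (eps : R) p a X :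
  0 < eps -> (1 < p)%N -> (0 < X)%N -> 2 / eps < p%:R ->
  (p ^ 2 * a <= p.+1 * X)%N -> a%:R / X%:R < eps.
Proof.
move=> eps_gt0 p_gt1 X_gt0; rewrite ltr_pdivrMr // => p_large flat.
have : (p * a < 2 * X)%N by nia.
rewrite -(ltr_nat R) !natrM ltr_pdivrMr ?ltr0n //.
have : 1 < p%:R :> R by rewrite ltr1n.
have : 0 < X%:R :> R by rewrite ltr0n.
nra.
Qed.

Theorem mainTheorem1 (R : realType) (eps : R) : 0 < eps ->
  exists N : nat, forall n : nat, (N <= n)%N ->
    exists A : {set cube n},
      (#|A|%:R / (2 ^ n)%:R < eps) /\
      forall (u : {set 'I_n}),
        n%:R / 4 <= #|u|%:R :> R -> #|u|%:R <= 3 * n%:R / 4 :> R ->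
        forall (B0 : {set subcube u}) (B1 : {set subcube (~: u)}),
          1 / 2 <= #|B0|%:R / (2 ^ #|u|)%:R :> R ->
          1 / 2 <= #|B1|%:R / (2 ^ #|~: u|)%:R :> R ->
          exists s : cube n, [/\ s \in A, restr u s \in B0 & restr (~: u) s \in B1].
Proof.
move=> eps_gt0; have [p [p_gt1 p_odd p_large]] := exists_odd_natr_gt (2 / eps).
have [M flat] := binom_mod_flat_eventually p_gt1.
exists (4 * M)%N => n le_4M_n; exists (weight_class 'I_n p 0); split.
  rewrite card_weight_class card_ord.
  apply: ratio_lt_of_sq_mul_le eps_gt0 p_gt1 _ p_large _; first by rewrite expn_gt0.
  by apply: flat; lia.
move=> u /natr_quarter_le u_ge /natr_le_three_quarters u_le B0 B1 half0 half1.
have card_uC : #|~: u| = (n - #|u|)%N by rewrite cardsCs setCK card_ord.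
apply: product_meets_weight_class => //; try by apply: flat; lia.
  by apply: natr_half_le_ratio half0; rewrite expn_gt0.
by apply: natr_half_le_ratio half1; rewrite expn_gt0.
Qed.
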